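(* Let $m\geq 1$, let $x_1,\ldots,x_m\in\{0,1\}$ with $x_j\neq x_{j+1}$ for $1\le j<m$ and $x_m=1$, and let $k_1,\ldots,k_m$ be positive integers with $k_1\geq 2$. Let $G$ be the threshold graph generated by the binary sequence $x_1^{k_1},x_2^{k_2},\ldots,x_m^{k_m}$, and let $n=k_1+\cdots+k_m$ be its number of vertices. Then \[ \operatorname{cdim}(G)=\begin{cases} n-m & \text{if } k_m>1,\\ n-m+1 & \text{if } k_m=1.\end{cases} \]
   Context: All graphs are finite, simple, undirected and nonempty. A threshold graph on $n$ vertices is generated by a binary sequence $y_1,\ldots,y_n\in\{0,1\}$: starting from the empty graph, in step $i$ one adds a new vertex which is isolated if $y_i=0$ and adjacent to all previously added vertices if $y_i=1$. The notation $x_1^{k_1},\ldots,x_m^{k_m}$ denotes the binary sequence consisting of $k_1$ copies of $x_1$, followed by $k_2$ copies of $x_2$, etc. For distinct vertices $v,w$, $\kappa(v,w)$ is the maximum number of internally vertex-disjoint $v$–$w$ paths (an edge $vw$ counts as one such path); $\kappa(v,v)=\infty$. For an ordered vertex set $W=(w_1,\ldots,w_k)$, $r_G(v,W)=[\kappa(v,w_1),\ldots,\kappa(v,w_k)]$. $W$ is resolving if $r_G(v_1,W)=r_G(v_2,W)$ implies $v_1=v_2$. The connectivity dimension $\operatorname{cdim}(G)$ is the minimum cardinality of a resolving set. *)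

From mathcomp Require Import all_boot.
From mathcomp Require Import boolp.

Set Implicit Arguments.
Unset Strict Implicit.
Unset Printing Implicit Defensive.

Section Graphs.
Variable T : finType.
Variable adj : rel T.  (* intended: symmetric and irreflexive *)

Definition is_vw_path (v w : T) (p : seq T) : bool :=
  [&& head w p == v, last v p == w, path adj v (behead p), uniq p & p != [::]].

Definition interior (v w : T) (p : seq T) : {set T} :=
  [set x in p | (x != v) && (x != w)].

Definition has_disjoint_paths (v w : T) (k : nat) : Prop :=
  exists F : seq (seq T),
    [/\ size F = k, uniq F, all (is_vw_path v w) F &
        pairwise (fun p q => [disjoint interior v w p & interior v w q]) F].

(* local connectivity kappa(v,w); None encodes infinity (v = w).
   Any such family has at most #|T| members, so the max over k <= #|T| is the
   true maximum. *)
Definition kappa (v w : T) : option nat :=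
  if v == w then None
  else Some (\max_(k < #|T|.+1 | `[< has_disjoint_paths v w k >]) (k : nat)).

Definition resolving (W : {set T}) : bool :=
  [forall v1 : T, forall v2 : T,
     [forall u in W, kappa v1 u == kappa v2 u] ==> (v1 == v2)].

Definition cdim : nat :=
  \big[minn/#|T|]_(W : {set T} | resolving W) #|W|.
End Graphs.

Definition block_seq (xs : seq bool) (ks : seq nat) : seq bool :=
  flatten [seq nseq p.2 p.1 | p <- zip xs ks].

(* threshold graph on vertices 0..n-1 generated by y (vertex i added at step i+1):
   i ~ j iff i <> j and the later of the two was added as a dominating vertex. *)
Definition threshold_adj (n : nat) (y : seq bool) : rel 'I_n :=
  fun i j => (i != j) && nth false y (maxn i j).

(* Disjoint a-b paths leave a through distinct neighbours, so kappa(a, b) is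
   at most deg a, with equality as soon as every neighbour of a other than b
   is adjacent to b; in particular kappa(v, last) = deg v, the last vertex
   being dominating.  Vertices of one run of equal letters are twins (their
   transposition is an automorphism), so a resolving set omits at most one
   vertex per run.  The first vertices of the runs have pairwise distinct
   degrees, hence distinct connectivities to the last vertex, so the vertices
   starting no run, together with the last vertex, form a resolving set of
   size n - m, or n - m + 1 when the last run is the last vertex alone.  In
   that case a resolving set cannot omit a vertex from every run: a vertex
   omitted from the last dominating run before the last vertex has the same
   connectivity as the last vertex to every other vertex. *)

From HB Require Import structures.
From mathcomp Require Import all_boot.
From mathcomp Require Import boolp.
From mathcomp Require Import fingroup perm zify.

Set Implicit Arguments.
Unset Strict Implicit.
Unset Printing Implicit Defensive.

(* Lets [bigD1] single out one resolving set in the minimum defining [cdim]. *)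
HB.instance Definition _ := SemiGroup.isComLaw.Build nat minn minnA minnC.

Section LocalConnectivity.
Variables (T : finType) (adj : rel T).

Definition deg (a : T) : nat := #|[set u | adj a u]|.

Lemma vw_pathP v w p : is_vw_path adj v w p <->
  exists p', [/\ p = v :: p', path adj v p', last v p' = w & uniq (v :: p')].
Proof.
split=> [|[p' [-> hp hl hu]]]; last by rewrite /is_vw_path hu /= hp hl !eqxx.
by case/and5P; case: p => [|x p'] //= /eqP-> /eqP hl hp hu _; exists p'.
Qed.

Lemma disjoint_paths_le_deg v w k :
  v != w -> has_disjoint_paths adj v w k -> k <= deg v.
Proof.
move=> vw [F [<- uF /allP allF pwF]].
pose second (p : seq T) := nth v p 1.
have secondP p : p \in F -> [/\ adj v (second p),
    second p = w -> p = [:: v; w] & second p != w -> second p \in interior v w p].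
  move=> /allF /vw_pathP [[|u p'] [-> /= hp hl hu]]; first by rewrite -hl eqxx in vw.
  case/andP: hp => vu _; rewrite /second /=; split=> // [uw|uw].
    case: p' hl hu => [|z p'] /= hl; first by rewrite uw.
    by rewrite uw -hl mem_last /= andbF.
  rewrite inE !inE eqxx orbT uw andbT /=.
  by case/andP: hu; rewrite !inE negb_or eq_sym => /andP[].
have second_uniq : uniq (map second F).
  have : pairwise [rel p q | (p != q) && [disjoint interior v w p & interior v w q]] F.
    by rewrite pairwise_relI -uniq_pairwise uF pwF.
  rewrite uniq_pairwise pairwise_map; apply: sub_in_pairwise (allss F) => p q pF qF.
  case/andP=> pq /pred0P dj /=; apply: contra_neq pq => spq.
  have [_ p1 p2] := secondP p pF; have [_ q1 q2] := secondP q qF.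
  have [spw|spw] := eqVneq (second p) w; first by rewrite p1 // q1 // -spq.
  by have := dj (second p); rewrite /= p2 // spq q2 // -spq.
rewrite -(size_map second) -(card_uniqP second_uniq) /deg subset_leq_card //.
by apply/subsetP => _ /mapP[p pF ->]; rewrite inE; case: (secondP p pF).
Qed.

Section Irreflexive.
Hypothesis adj_irr : irreflexive adj.

(* One path [a; b] if b is a neighbour of a, and [a; u; b] through each other
   neighbour u. *)
Lemma disjoint_paths_deg a b : a != b ->
  (forall u, adj a u -> u != b -> adj u b) -> has_disjoint_paths adj a b (deg a).
Proof.
move=> ab nbh_ab.
pose route u := if u == b then [:: a; b] else [:: a; u; b].
have interior_route u x : x \in interior a b (route u) -> x = u.
  rewrite /route; case: (u =P b) => _; rewrite !inE;
  by case: (x =P a); case: (x =P b); case: (x =P u); rewrite /= ?andbF.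
exists (map route (enum [set u | adj a u])); split.
- by rewrite size_map -cardE.
- have routeK : cancel route (fun p => nth a p 1).
    by move=> u; rewrite /route; case: ifP => // /eqP->.
  by rewrite (map_inj_uniq (can_inj routeK)) enum_uniq.
- apply/allP => p /mapP[u]; rewrite mem_enum inE => au ->.
  have a_neq_u : a != u by apply: contraTneq au => <-; rewrite adj_irr.
  apply/vw_pathP; rewrite /route; case: (u =P b) => [ub|/eqP ub].
    by exists [:: b]; rewrite /= -ub au !inE ub ab.
  by exists [:: u; b]; rewrite /= au nbh_ab // !inE negb_or a_neq_u ab ub.
- move: (enum_uniq [set u | adj a u]); rewrite uniq_pairwise pairwise_map.
  apply: sub_pairwise => u u' /= uu'; apply/pred0P => x /=.
  apply/negbTE/andP => -[/interior_route xu /interior_route xu'].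
  by rewrite -xu -xu' eqxx in uu'.
Qed.

Lemma kappa_deg a b : a != b ->
  (forall u, adj a u -> u != b -> adj u b) -> kappa adj a b = Some (deg a).
Proof.
move=> ab nbh_ab; rewrite /kappa (negbTE ab); congr Some; apply/eqP.
rewrite eqn_leq; apply/andP; split.
  by apply/bigmax_leqP => k /asboolP; apply: disjoint_paths_le_deg.
have deg_lt : deg a < #|T|.+1 by rewrite ltnS max_card.
by apply: (leq_bigmax_cond (Ordinal deg_lt)); apply/asboolP; apply: disjoint_paths_deg.
Qed.
End Irreflexive.

Section Symmetric.
Hypothesis adj_sym : symmetric adj.

Lemma vw_path_rev v w p : v != w -> is_vw_path adj v w p -> is_vw_path adj w v (rev p).
Proof.
move=> vw /vw_pathP[p' [-> hp hl hu]]; apply/vw_pathP.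
case/lastP: p' hp hl hu => [|r z] hp hl hu; first by rewrite -hl eqxx in vw.
rewrite last_rcons in hl; subst z; exists (rcons (rev r) v); split.
- by rewrite rev_cons rev_rcons.
- have := rev_path adj v (rcons r w).
  rewrite last_rcons belast_rcons rev_cons => ->.
  by rewrite (eq_path (e' := adj)) // => x y /=; rewrite adj_sym.
- by rewrite last_rcons.
- by rewrite -rev_cons -rev_rcons rev_uniq.
Qed.

Lemma interior_rev (v w : T) p : interior w v (rev p) = interior v w p.
Proof. by apply/setP => x; rewrite !inE mem_rev [(x != w) && _]andbC. Qed.

Lemma disjoint_paths_sym v w k :
  v != w -> has_disjoint_paths adj v w k -> has_disjoint_paths adj w v k.
Proof.
move=> vw [F [sF uF /allP allF pwF]]; exists (map rev F); split.
- by rewrite size_map.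
- by rewrite (map_inj_uniq (can_inj (@revK _))).
- by apply/allP => _ /mapP[p pF ->]; exact/vw_path_rev/allF.
- by rewrite pairwise_map; apply: sub_pairwise pwF => p q /=; rewrite !interior_rev.
Qed.

Lemma kappa_sym v w : kappa adj v w = kappa adj w v.
Proof.
rewrite /kappa eq_sym; case: eqP => // /eqP wv; congr Some; apply: eq_bigl => k.
by apply/asboolP/asboolP; apply: disjoint_paths_sym; rewrite // eq_sym.
Qed.
End Symmetric.

Lemma disjoint_paths_perm (f : {perm T}) v w k :
  (forall x y, adj (f x) (f y) = adj x y) ->
  has_disjoint_paths adj v w k -> has_disjoint_paths adj (f v) (f w) k.
Proof.
move=> f_adj [F [sF uF /allP allF pwF]]; exists (map (map f) F); split.
- by rewrite size_map.
- by rewrite (map_inj_uniq (inj_map (@perm_inj _ f))).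
- apply/allP => _ /mapP[p /allF /vw_pathP[p' [-> hp hl hu]] ->].
  apply/vw_pathP; exists (map f p'); split => //.
  + by rewrite path_map (eq_path (e' := adj)) // => x y /=; rewrite f_adj.
  + by rewrite last_map hl.
  + by rewrite -map_cons (map_inj_uniq (@perm_inj _ f)).
- rewrite pairwise_map; apply: sub_pairwise pwF => p q /= /pred0P dj.
  apply/pred0P => x /=; rewrite !inE -[x](permKV f) !(mem_map (@perm_inj _ f)).
  by rewrite !(inj_eq (@perm_inj _ f)); have := dj ((f^-1)%g x); rewrite /= !inE.
Qed.

Lemma kappa_perm (f : {perm T}) : (forall x y, adj (f x) (f y) = adj x y) ->
  forall v w, kappa adj (f v) (f w) = kappa adj v w.
Proof.
move=> f_adj v w; rewrite /kappa (inj_eq (@perm_inj _ f)); case: eqP => // _.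
congr Some; apply: eq_bigl => k; apply/asboolP/asboolP; last exact: disjoint_paths_perm.
have finv_adj x y : adj ((f^-1)%g x) ((f^-1)%g y) = adj x y by rewrite -f_adj !permKV.
by move/(disjoint_paths_perm finv_adj); rewrite !permK.
Qed.

Lemma resolving_inj W v1 v2 : resolving adj W ->
  (forall u, u \in W -> kappa adj v1 u = kappa adj v2 u) -> v1 = v2.
Proof.
move=> /forallP/(_ v1)/forallP/(_ v2)/implyP resW same; apply/eqP/resW.
by apply/forall_inP => u /same->.
Qed.

Lemma cdim_eq W0 c : resolving adj W0 -> #|W0| = c ->
  (forall W, resolving adj W -> c <= #|W|) -> cdim adj = c.
Proof.
move=> resW0 <- minW0; apply/eqP.
rewrite eqn_leq /cdim (bigD1 W0) //= geq_minl leq_min leqnn /=.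
apply: (big_ind (leq #|W0|)) => [|x y hx hy|W /andP[/minW0]] //; first exact: max_card.
by rewrite leq_min hx hy.
Qed.
End LocalConnectivity.

Lemma card_ord_count n (P : pred nat) : #|[set i : 'I_n | P i]| = count P (iota 0 n).
Proof.
rewrite cardsE cardE /enum_mem -enumT size_filter -val_enum_ord count_map.
exact: eq_count.
Qed.

Lemma nth_const_run (y : seq bool) a b :
  (forall l, a < l <= b -> nth false y l.-1 = nth false y l) ->
  forall l, a <= l <= b -> nth false y l = nth false y b.
Proof.
move=> step l /andP[al /subnKC]; move: (b - l) => k eb; subst b.
elim: k l al step => [|k IHk] l al step; first by rewrite addn0.
have step_l : nth false y l = nth false y l.+1 by apply: (step l.+1); lia.
by rewrite -addSnnS in step *; rewrite step_l; apply: IHk => //; apply: leqW.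
Qed.

Section ThresholdGraph.
Variables (n : nat) (y : seq bool).
Local Notation yy l := (nth false y l).
Local Notation adj := (@threshold_adj n y).

Lemma threshold_adj_irr : irreflexive adj.
Proof. by move=> i; rewrite /threshold_adj eqxx. Qed.

Lemma threshold_adj_sym : symmetric adj.
Proof. by move=> i j; rewrite /threshold_adj eq_sym maxnC. Qed.

Section Twins.
Variables i j : 'I_n.
Hypotheses (le_ij : i <= j) (const_ij : forall l, i <= l <= j -> yy l = yy j).

Lemma twin_maxn (c : nat) : yy (maxn i c) = yy (maxn j c).
Proof.
rewrite maxnC [maxn j c]maxnC.
by case: leqP => ic; case: leqP => jc //; first [apply: const_ij; lia | lia].
Qed.

Lemma threshold_adj_tperm x z : adj (tperm i j x) (tperm i j z) = adj x z.
Proof.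
have twin_maxnC c : yy (maxn c i) = yy (maxn c j) by rewrite ![maxn c _]maxnC twin_maxn.
rewrite /threshold_adj (inj_eq (@perm_inj _ _)); congr andb.
by do 2 case: tpermP => [->|->|_ _]; rewrite ?twin_maxn ?twin_maxnC.
Qed.

Lemma kappa_twins w : w != i -> w != j -> kappa adj i w = kappa adj j w.
Proof.
rewrite ![w == _]eq_sym => iw jw.
by rewrite -(kappa_perm threshold_adj_tperm) tpermL tpermD.
Qed.
End Twins.

Definition ones (s k : nat) : nat := count (nth false y) (iota s k).

Lemma onesD s k1 k2 : ones s (k1 + k2) = ones s k1 + ones (s + k1) k2.
Proof. by rewrite /ones iotaD count_cat. Qed.

Lemma ones1 s : ones s 1 = yy s.
Proof. by rewrite /ones /= addn0. Qed.

Lemma ones_le s k : ones s k <= k.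
Proof. by rewrite -{2}(size_iota s k) count_size. Qed.

(* The earlier vertices are neighbours of a iff a was added dominating; a later
   vertex l is a neighbour of a iff l was. *)
Lemma deg_threshold (a : 'I_n) :
  deg adj a = (if yy a then val a else 0) + ones a.+1 (n - a.+1).
Proof.
rewrite /deg; have -> : [set u | adj a u] = [set u : 'I_n | (u != a :> nat) && yy (maxn a u)].
  by apply/setP => u; rewrite !inE /threshold_adj eq_sym.
have split_iota : iota 0 n = iota 0 a ++ (a : nat) :: iota a.+1 (n - a.+1).
  by rewrite -[in LHS](subnKC (ltn_ord a)) addSnnS iotaD.
rewrite (card_ord_count n (fun l => (l != a) && yy (maxn a l))) split_iota count_cat /= eqxx.
congr (_ + _).
  rewrite (@eq_in_count _ _ (fun=> yy a)); last first.
    by move=> l; rewrite mem_iota => /andP[_ la]; rewrite (maxn_idPl (ltnW la)) (ltn_eqF la).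
  by case: (yy a); rewrite ?count_pred0 // (eq_count (a2 := predT)) // count_predT size_iota.
apply: eq_in_count => l; rewrite mem_iota => /andP[al _].
by rewrite (maxn_idPr (ltnW al)) eq_sym (ltn_eqF al).
Qed.

Definition run_starts : {set 'I_n} :=
  [set i : 'I_n | (val i == 0) || (yy i.-1 != yy i)].

Lemma deg_neq_run_start (v j : 'I_n) :
  v < j -> 1 < j -> yy j.-1 != yy j -> deg adj v != deg adj j.
Proof.
move=> vj j_gt1 yj; rewrite !deg_threshold.
have lt_jn := ltn_ord j; set K := ones j.+1 (n - j.+1).
have [vj1|jv1] := ltnP v j.-1.
  have -> : n - v.+1 = (j.-1 - v.+1) + 1 + 1 + (n - j.+1) by lia.
  have e1 : v.+1 + (j.-1 - v.+1) = j.-1 by lia.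
  have e2 : j.-1 + 1 = j by lia.
  rewrite !onesD !addnA e1 e2 addn1 -/K; have := ones_le v.+1 (j.-1 - v.+1).
  by case: (yy v) yj; case: (yy j.-1); case: (yy j) => //= _; lia.
have -> : n - v.+1 = 1 + (n - j.+1) by lia.
have ev : v.+1 = j by lia.
have yvj : yy v != yy j by move: yj; rewrite -ev.
rewrite onesD ones1 ev addn1 -/K.
by case: (yy v) yvj; case: (yy j) => //= _; lia.
Qed.

Section LastDominating.
Hypotheses (n_gt1 : 1 < n) (y01 : yy 0 = yy 1) (y_last : yy n.-1).

Definition vfirst : 'I_n := Ordinal (ltnW n_gt1).
Lemma vlast_proof : n.-1 < n. Proof. by rewrite ltn_predL ltnW. Qed.
Definition vlast : 'I_n := Ordinal vlast_proof.

Lemma lt_vlast (u : 'I_n) : u != vlast -> u < n.-1.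
Proof.
move=> /eqP u_neq; have := ltn_ord u; rewrite -[n in _ < n](prednK (ltnW n_gt1)) ltnS.
by rewrite leq_eqVlt => /orP[/eqP u_last|//]; case: u_neq; exact: val_inj.
Qed.

Lemma adj_vlast u : u != vlast -> adj u vlast.
Proof.
move=> /[dup] /lt_vlast/ltnW/maxn_idPr u_lt ul.
by rewrite /threshold_adj ul u_lt.
Qed.

Lemma kappa_vlast v : v != vlast -> kappa adj v vlast = Some (deg adj v).
Proof.
move=> vl; apply: kappa_deg => //; first exact: threshold_adj_irr.
by move=> u _; apply: adj_vlast.
Qed.

(* [y01] excludes j = 1: vertices 0 and 1 are twins whatever y_0 is. *)
Lemma run_start_pred (j : 'I_n) :
  j \in run_starts -> j != 0 :> nat -> 1 < j /\ yy j.-1 != yy j.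
Proof.
rewrite inE => /orP[/eqP->//|yj] j0; split=> //.
rewrite ltn_neqAle lt0n j0 andbT; apply: contraNneq yj => j1.
by rewrite -j1 /= y01.
Qed.

Lemma deg_run_starts_inj : {in run_starts &, injective (deg adj)}.
Proof.
have deg_neq (v j : 'I_n) : v < j -> j \in run_starts -> deg adj v != deg adj j.
  move=> vj /run_start_pred[|j_gt1 yj]; first by rewrite -lt0n (leq_ltn_trans (leq0n v) vj).
  exact: deg_neq_run_start.
move=> i j iR jR dij; apply: val_inj; case: (ltngtP i j) => // [ij|ji].
  by have := deg_neq _ _ ij jR; rewrite dij eqxx.
by have := deg_neq _ _ ji iR; rewrite dij eqxx.
Qed.

Lemma resolving_run_starts : resolving adj (~: (run_starts :\ vlast)).
Proof.
apply/forallP => v1; apply/forallP => v2; apply/implyP => /forall_inP same.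
have [v1W|] := boolP (v1 \in ~: (run_starts :\ vlast)).
  by have := same v1 v1W; rewrite /kappa eqxx; case: (eqVneq v2 v1).
rewrite inE negbK => /setD1P[v1l v1R].
have [v2W|] := boolP (v2 \in ~: (run_starts :\ vlast)).
  by have := same v2 v2W; rewrite /kappa eqxx; case: (eqVneq v1 v2).
rewrite inE negbK => /setD1P[v2l v2R].
have vlastW : vlast \in ~: (run_starts :\ vlast) by rewrite !inE eqxx.
move/eqP: (same vlast vlastW); rewrite !kappa_vlast // => -[deg12].
by rewrite (deg_run_starts_inj v1R v2R deg12).
Qed.

Definition run_start (v : 'I_n) : 'I_n :=
  [arg max_(r > vfirst | (r \in run_starts) && (r <= v)) val r].

Lemma run_startP v : [/\ run_start v \in run_starts, run_start v <= v &
  forall l, run_start v <= l <= v -> yy l = yy v].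
Proof.
rewrite /run_start; case: arg_maxnP => [|r /andP[rR rv] r_max]; first by rewrite inE.
split=> //; apply: nth_const_run => l /andP[rl lv]; apply/eqP/negP => /negP yl.
have := r_max (Ordinal (leq_ltn_trans lv (ltn_ord v))); rewrite inE /= yl orbT lv.
by move=> /(_ isT); rewrite leqNgt rl.
Qed.

Lemma run_start_id v : v \in run_starts -> run_start v = v.
Proof.
rewrite /run_start; case: arg_maxnP => [|r /andP[_ rv] r_max vR]; first by rewrite inE.
by apply/val_inj/eqP; rewrite eqn_leq rv; apply: r_max; rewrite vR leqnn.
Qed.

Lemma run_start_sub (C : {set 'I_n}) : run_start @: C \subset run_starts.
Proof. by apply/subsetP => _ /imsetP[v _ ->]; case: (run_startP v). Qed.

(* v is taken in the run of the last dominating vertex q below vlast: every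
   edge avoiding vlast has its later endpoint in a dominating vertex <= q. *)
Lemma exists_vlast_lookalike (C : {set 'I_n}) :
  vlast \in run_starts -> run_starts \subset run_start @: C ->
  exists2 v, v \in C & v != vlast /\
    forall u, u != v -> u != vlast -> kappa adj u v = kappa adj u vlast.
Proof.
move=> lastR /subsetP coverC.
pose P (q : 'I_n) := (val q == 0) || (q < n.-1) && yy q.
have [q Pq q_max] : exists2 q, P q & forall r, P r -> r <= q.
  by case: (@arg_maxnP _ vfirst P val) => [|q Pq q_max]; [rewrite /P eqxx | exists q].
have q_lt : q < n.-1.
  by case/orP: Pq => [/eqP->|/andP[]//]; lia.
have [v vC rs_vq] : exists2 v, v \in C & run_start v = run_start q.
  by have [qR _ _] := run_startP q; have /imsetP[v vC ->] := coverC _ qR; exists v.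
have [_ rs_v const_v] := run_startP v; have [_ rs_q const_q] := run_startP q.
have vl : v != vlast.
  apply: contraTneq q_lt => vE; rewrite -leqNgt (leq_trans _ rs_q) //.
  by rewrite -rs_vq vE run_start_id.
exists v => //; split=> // u uv ul; rewrite kappa_vlast //.
apply: kappa_deg => //; first exact: threshold_adj_irr.
move=> w uw wv; have [->|wl] := eqVneq w vlast.
  by rewrite threshold_adj_sym adj_vlast.
case/andP: uw => /eqP uw y_uw.
have M_lt : maxn u w < n.-1 by rewrite gtn_max !lt_vlast.
have M_le : maxn u w <= q.
  by apply: (q_max (Ordinal (leq_trans M_lt (leq_pred n)))); rewrite /P /= M_lt y_uw orbT.
have yq : yy q.
  case/orP: Pq => [/eqP q0|/andP[]//]; exfalso; apply/uw/ord_inj.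
  by move: M_le; rewrite q0 geq_max !leqn0 => /andP[/eqP-> /eqP->].
have yv : yy v by rewrite -(const_v (run_start v)) ?leqnn ?rs_v // rs_vq const_q ?leqnn.
have vq : v <= q by apply: q_max; rewrite /P lt_vlast // yv orbT.
rewrite /threshold_adj wv /=; case: (leqP w v) => [_|vw] //.
by rewrite const_q // -rs_vq (leq_trans rs_v (ltnW vw)) (leq_trans (leq_maxr u w) M_le).
Qed.

Section Resolving.
Variable W : {set 'I_n}.
Hypothesis resW : resolving adj W.

Lemma run_start_inj : {in ~: W &, injective run_start}.
Proof.
have run_start_le v1 v2 : v1 \in ~: W -> v2 \in ~: W -> v1 <= v2 ->
    run_start v1 = run_start v2 -> v1 = v2.
  move=> v1W v2W le12 rs12; apply: (resolving_inj resW) => u uW.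
  have [_ rs_v2 const_v2] := run_startP v2; have [_ rs_v1 _] := run_startP v1.
  apply: kappa_twins => //.
  - by move=> l /andP[v1l lv2]; apply: const_v2; rewrite lv2 -rs12 (leq_trans rs_v1 v1l).
  - by apply: contraTneq uW => ->; rewrite inE in v1W.
  - by apply: contraTneq uW => ->; rewrite inE in v2W.
move=> v1 v2 v1W v2W rs12; case: (leqP v1 v2) => [le12|/ltnW le21].
  exact: run_start_le.
by apply/esym/run_start_le.
Qed.

Lemma card_compl_resolving : #|~: W| <= #|run_starts|.
Proof. by rewrite -(card_in_imset run_start_inj) subset_leq_card ?run_start_sub. Qed.

Lemma card_compl_resolving_lt : vlast \in run_starts -> #|~: W| < #|run_starts|.
Proof.
move=> lastR; rewrite ltn_neqAle card_compl_resolving andbT.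
apply/negP => /eqP card_eq.
have cover : run_starts \subset run_start @: (~: W).
  suff /eqP-> : run_start @: (~: W) == run_starts by [].
  by rewrite eqEcard run_start_sub (card_in_imset run_start_inj) card_eq /=.
have lastW : vlast \in ~: W.
  have /imsetP[x xW xE] := subsetP cover _ lastR.
  have [_ rs_x _] := run_startP x; suff -> : vlast = x by [].
  by apply/ord_inj; move: rs_x (ltn_ord x); rewrite -xE /=; lia.
have [v vW [vl lookalike]] := exists_vlast_lookalike lastR cover.
move/eqP: vl; apply; apply: (resolving_inj resW) => u uW.
have uv : u != v by apply: contraTneq uW => ->; rewrite inE in vW.
have ul : u != vlast by apply: contraTneq uW => ->; rewrite inE in lastW.
by rewrite !(kappa_sym threshold_adj_sym _ u) lookalike.
Qed.

Lemma card_resolving : n - #|run_starts :\ vlast| <= #|W|.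
Proof.
have := max_card (run_starts :\ vlast); rewrite card_ord => S_le_n.
rewrite -(leq_add2r #|~: W|) cardsC card_ord -[X in _ <= X](subnK S_le_n) leq_add2l.
have [lastR|lastNR] := boolP (vlast \in run_starts).
  by have := card_compl_resolving_lt lastR; rewrite (cardsD1 vlast run_starts) lastR.
by have := card_compl_resolving; rewrite (cardsD1 vlast run_starts) (negbTE lastNR).
Qed.
End Resolving.

Lemma cdim_threshold : cdim adj = n - #|run_starts :\ vlast|.
Proof.
apply: cdim_eq resolving_run_starts _ _; first by rewrite cardsCs setCK card_ord.
exact: card_resolving.
Qed.
End LastDominating.
End ThresholdGraph.

Definition changes (s : seq bool) : nat := count (fun p => p.1 != p.2) (zip s (behead s)).

Lemma changes_nseq a k s : changes (nseq k.+1 a ++ s) = changes (a :: s).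
Proof. by elim: k => // k IHk; rewrite -IHk /changes /= eqxx. Qed.

Lemma changes_cons a s : changes (a :: s) = (a != head a s) + changes s.
Proof. by case: s => [|b s] //=; rewrite eqxx. Qed.

Lemma changes_count a s :
  changes (a :: s) = count (fun i => nth false (a :: s) i != nth false s i) (iota 0 (size s)).
Proof.
elim: s a => [|b s IHs] a //; rewrite changes_cons IHs /= -[1]addn0 iotaDl count_map.
by congr (_ + _); apply: eq_count => i; rewrite /= add1n.
Qed.

Lemma card_run_starts n (y : seq bool) :
  size y = n -> #|run_starts n y| = (n != 0) + changes y.
Proof.
move=> <-.
rewrite (card_ord_count _ (fun i => (i == 0) || (nth false y i.-1 != nth false y i))).
case: y => [|a s] //=; rewrite -[1]addn0 iotaDl count_map add1n changes_count.
by congr _.+1; apply: eq_count => i; rewrite /= add1n.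
Qed.

Lemma size_block_seq xs ks : size xs = size ks -> size (block_seq xs ks) = sumn ks.
Proof.
elim: xs ks => [|x xs IHxs] [|k ks] //= [/IHxs size_eq].
by rewrite size_cat size_nseq size_eq.
Qed.

Lemma block_seq_cons x xs k ks :
  block_seq (x :: xs) (k :: ks) = nseq k x ++ block_seq xs ks.
Proof. by []. Qed.

Lemma block_seq_rcons xs ks x k : size xs = size ks ->
  block_seq (rcons xs x) (rcons ks k) = block_seq xs ks ++ nseq k x.
Proof. by move=> size_eq; rewrite /block_seq zip_rcons // map_rcons flatten_rcons. Qed.

Lemma changes_block_seq xs ks : size xs = size ks ->
  sorted [rel a b | a != b] xs -> all (leq 1) ks ->
  changes (block_seq xs ks) = (size xs).-1.
Proof.
elim: xs ks => [|x xs IHxs] [|k ks] // [size_eq] alt /andP[k_pos ks_pos].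
rewrite block_seq_cons -(prednK k_pos) changes_nseq changes_cons.
case: xs ks size_eq alt ks_pos IHxs => [|x' xs] [|k' ks] //; first by rewrite eqxx.
move=> [size_eq] /andP[xx' alt] ks_pos IH.
have k'_pos : 0 < k' by case/andP: ks_pos.
rewrite IH //=; last by rewrite size_eq.
by move: xx' => /= xx'; rewrite block_seq_cons -(prednK k'_pos) /= xx'.
Qed.

Lemma last_block_seq xs ks : size xs = size ks -> all (leq 1) ks ->
  last false (block_seq xs ks) = last false xs.
Proof.
case/lastP: xs => [|xs x]; case/lastP: ks => [|ks k] //; rewrite ?size_rcons // => -[size_eq].
rewrite all_rcons block_seq_rcons // last_cat last_rcons => /andP[k_pos _].
by rewrite -(prednK k_pos) /=; elim: k.-1.
Qed.

Lemma block_seq_last_switch xs ks :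
  size xs = size ks -> sorted [rel a b | a != b] xs -> all (leq 1) ks -> 1 < sumn ks ->
  (nth false (block_seq xs ks) (sumn ks).-2 != nth false (block_seq xs ks) (sumn ks).-1)
  = (last 0 ks == 1).
Proof.
case/lastP: xs => [|xs x]; case/lastP: ks => [|ks k] //;
  rewrite ?size_rcons // => -[size_eq] alt.
rewrite all_rcons sumn_rcons last_rcons block_seq_rcons // => /andP[k_pos ks_pos].
rewrite !nth_cat (size_block_seq size_eq) !nth_nseq.
case: k k_pos => [|[|k]] // _ n_gt1; last first.
  by rewrite !addnS /=; repeat case: ifP => ?; rewrite ?eqxx //; lia.
have prefix_gt0 : 0 < sumn ks by lia.
rewrite addn1 /= ltnn subnn ltn_predL prefix_gt0 /= -(size_block_seq size_eq).
rewrite nth_last last_block_seq //.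
case: xs alt size_eq => [_ /esym/size0nil ks0|x0 xs]; first by rewrite ks0 in prefix_gt0.
by rewrite /= rcons_path => /andP[_ /= ->].
Qed.

Lemma block_seq_nth01 xs ks : 1 < nth 0 ks 0 ->
  nth false (block_seq xs ks) 0 = nth false (block_seq xs ks) 1.
Proof. by case: xs ks => [|x xs] [|[|[|k]] ks]. Qed.

Lemma size_le_sumn ks : all (leq 1) ks -> size ks <= sumn ks.
Proof. by elim: ks => //= k ks IHks /andP[k_pos /IHks]; rewrite -add1n; apply: leq_add. Qed.

Lemma card_run_starts_block_seq xs ks : size xs = size ks ->
  sorted [rel a b | a != b] xs -> all (leq 1) ks -> 0 < size xs ->
  #|run_starts (sumn ks) (block_seq xs ks)| = size xs.
Proof.
move=> size_eq alt ks_pos xs_gt0.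
have n_gt0 : 0 < sumn ks by rewrite (leq_trans _ (size_le_sumn ks_pos)) -?size_eq.
rewrite (card_run_starts (size_block_seq size_eq)) changes_block_seq //.
by rewrite -lt0n n_gt0 add1n prednK.
Qed.

Theorem mainTheorem5 (m : nat) (xs : seq bool) (ks : seq nat) :
  1 <= m -> size xs = m -> size ks = m ->
  (forall j, j.+1 < m -> nth false xs j != nth false xs j.+1) ->
  nth false xs m.-1 = true ->
  (forall j, j < m -> 0 < nth 0 ks j) ->
  2 <= nth 0 ks 0 ->
  cdim (@threshold_adj (sumn ks) (block_seq xs ks)) =
  (if 1 < nth 0 ks m.-1 then sumn ks - m else sumn ks - m + 1).
Proof.
move=> m_gt0 size_xs; subst m => size_ks alt_nth x_last pos_nth k1_ge2.
have size_eq : size xs = size ks by [].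
have alt : sorted [rel a b | a != b] xs by apply/(sortedP false).
have ks_pos : all (leq 1) ks by apply/(all_nthP 0) => j; rewrite size_ks => /pos_nth.
have n_gt1 : 1 < sumn ks.
  by apply: leq_trans k1_ge2 _; case: (ks) => //= k ks'; apply: leq_addr.
have y_last : nth false (block_seq xs ks) (sumn ks).-1.
  by rewrite -(size_block_seq size_eq) nth_last last_block_seq // -nth_last.
rewrite (cdim_threshold n_gt1 (block_seq_nth01 _ k1_ge2) y_last).
have := card_run_starts_block_seq size_eq alt ks_pos m_gt0.
have n1_gt0 : 0 < (sumn ks).-1 by rewrite -subn1 subn_gt0.
rewrite (cardsD1 (vlast n_gt1)) inE /= (gtn_eqF n1_gt0) block_seq_last_switch //.
have := size_le_sumn ks_pos; have : 0 < last 0 ks.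
  by rewrite -nth_last pos_nth // size_ks prednK.
rewrite -size_ks nth_last; move: #|_ :\ _| => S.
by case: (last 0 ks) => [|[|k]] //= _; lia.
Qed.
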